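(* Let $\mathscr{X}$ be a complex Banach space, $\mathcal{A}\subseteq\mathcal{B}(\mathscr{X})$ a reflexive algebra, and $S\in\mathcal{B}(\mathscr{X})$ invertible. The following are equivalent: (a) $S\in\mathrm{Col}(\mathcal{A})$; (b) $S\mathcal{A}_x\in\mathrm{Lat}(\mathcal{A})$ and $S^{-1}\mathcal{A}_x\in\mathrm{Lat}(\mathcal{A})$ for all $x\in\mathscr{X}$; (c) $S\mathcal{A}S^{-1}=\mathcal{A}$; (d) $\mathrm{Lat}(S\mathcal{A}S^{-1})=\mathrm{Lat}(\mathcal{A})$; (e) $S\mathcal{A}_x=\mathcal{A}_{Sx}$ for all $x\in\mathscr{X}$.
   Context: $\mathrm{Lat}(\mathcal{T})$ is the set of closed subspaces invariant under all operators in $\mathcal{T}\subseteq\mathcal{B}(\mathscr{X})$; $\mathrm{Alg}(\mathfrak{F})=\{T\in\mathcal{B}(\mathscr{X}):T\mathscr{M}\subseteq\mathscr{M}\ \forall\mathscr{M}\in\mathfrak{F}\}$. A reflexive algebra is a subalgebra $\mathcal{A}\subseteq\mathcal{B}(\mathscr{X})$ with $\mathrm{Alg}\,\mathrm{Lat}(\mathcal{A})=\mathcal{A}$. For $x\in\mathscr{X}$, $\mathcal{A}_x=\overline{\{Ax:A\in\mathcal{A}\}}$. An invertible $S$ is a collineation of a family $\mathfrak{F}$ of closed subspaces if for all closed subspaces $\mathscr{M}$: $\mathscr{M}\in\mathfrak{F}$ iff $S\mathscr{M}\in\mathfrak{F}$; $\mathrm{Col}(\mathcal{A}):=\mathrm{Col}(\mathrm{Lat}(\mathcal{A}))$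 is the group of collineations of $\mathrm{Lat}(\mathcal{A})$. *)

From HB Require Import structures.
From mathcomp Require Import all_boot all_order all_algebra.
From mathcomp Require Import all_classical all_reals all_analysis.
From mathcomp Require Import complex.
Set Implicit Arguments. Unset Strict Implicit. Unset Printing Implicit Defensive.
Import Order.TTheory GRing.Theory Num.Theory.
Import numFieldNormedType.Exports.
Local Open Scope classical_set_scope.
Local Open Scope ring_scope.

Section Ops.
Variables (R : realType) (X : completeNormedModType (R[i])).

(* bounded (= continuous) linear operators on X *)
Definition bop (T : X -> X) : Prop := linear T /\ continuous T.

Definition closed_subspace (M : set X) : Prop :=
  closed M /\ M 0 /\ (forall (a : R[i]) u v, M u -> M v -> M (a *: u + v)).

Definition subalgebra (A : set (X -> X)) : Prop :=
  A `<=` bop /\ A (fun _ => 0) /\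
  (forall (a : R[i]) T U, A T -> A U -> A (fun x => a *: T x + U x)) /\
  (forall T U, A T -> A U -> A (T \o U)).

Definition Lat (T : set (X -> X)) : set (set X) :=
  [set M | closed_subspace M /\ forall A, T A -> A @` M `<=` M].

Definition Alg (F : set (set X)) : set (X -> X) :=
  [set T | bop T /\ forall M, F M -> T @` M `<=` M].

Definition reflexive_algebra (A : set (X -> X)) : Prop :=
  subalgebra A /\ Alg (Lat A) = A.

Definition orbit_sp (A : set (X -> X)) (x : X) : set X :=
  closure [set T x | T in A].

Definition bop_inverse (S Sinv : X -> X) : Prop :=
  bop S /\ bop Sinv /\ S \o Sinv = id /\ Sinv \o S = id.

Definition collineation (F : set (set X)) (S : X -> X) : Prop :=
  forall M, closed_subspace M -> (F M <-> F (S @` M)).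

Definition Col (A : set (X -> X)) : set (X -> X) :=
  [set S | (exists Sinv, bop_inverse S Sinv) /\ collineation (Lat A) S].

Definition conj_alg (S Sinv : X -> X) (A : set (X -> X)) : set (X -> X) :=
  [set S \o T \o Sinv | T in A].
End Ops.

From HB Require Import structures.
From mathcomp Require Import all_boot all_order all_algebra.
From mathcomp Require Import all_classical all_reals all_analysis.
From mathcomp Require Import complex.
Import Order.TTheory GRing.Theory Num.Theory.
Import numFieldNormedType.Exports.
Local Open Scope classical_set_scope.
Local Open Scope ring_scope.

Set Implicit Arguments.
Unset Strict Implicit.
Unset Printing Implicit Defensive.

(* Conjugation by S transports invariant subspaces: N is invariant for
   S A S^-1 iff S^-1 N is invariant for A.  Hence (a) <-> (d), and by
   reflexivity A = Alg Lat A the lattice determines the algebra, giving (c).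
   The cyclic subspaces A_x are the smallest invariant subspaces containing x,
   and every invariant subspace is the union of the A_x it contains, so S maps
   Lat A into itself as soon as it maps every A_x into Lat A; this gives (b)
   and (e). *)

Section BoundedOperators.
Variables (R : realType) (X : completeNormedModType R[i]).

Lemma linear_fun0 (f : X -> X) : linear f -> f 0 = 0.
Proof.
move=> lf; have := lf 1 0 0; rewrite !scale1r addr0 => f00.
by apply: (@addrI _ (f 0)); rewrite addr0 -f00.
Qed.

Lemma bop_id : bop (@id X).
Proof. by split=> // x; exact: cvg_id. Qed.

Lemma bop_comp (f g : X -> X) : bop f -> bop g -> bop (f \o g).
Proof.
move=> [lf cf] [lg cg]; split; first by move=> a u v /=; rewrite lg lf.
by move=> x; apply: continuous_comp; [exact: cg | exact: cf].
Qed.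

Section Inverse.
Variables (S Sinv : X -> X).
Hypothesis SSinv : bop_inverse S Sinv.

Lemma bop_inverse_sym : bop_inverse Sinv S.
Proof. by case: SSinv => [? [? [? ?]]]. Qed.

Lemma bop_inverseK : cancel Sinv S.
Proof. by case: SSinv => _ [_ [e _]] y; have /= := congr1 (fun f => f y) e. Qed.

Lemma bop_inverseKV : cancel S Sinv.
Proof. by case: SSinv => _ [_ [_ e]] y; have /= := congr1 (fun f => f y) e. Qed.

Lemma image_bop_inverse (M : set X) : S @` M = Sinv @^-1` M.
Proof.
apply/seteqP; split; first by move=> _ [m Mm <-] /=; rewrite bop_inverseKV.
by move=> y My; exists (Sinv y); rewrite ?bop_inverseK.
Qed.

Lemma image_bop_inverseK (M : set X) : Sinv @` (S @` M) = M.
Proof. by rewrite image_comp eq_image_id // => x _; exact: bop_inverseKV. Qed.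

End Inverse.

Lemma image_closure_sub (f : X -> X) (E F : set X) :
  continuous f -> closed F -> f @` E `<=` F -> f @` closure E `<=` F.
Proof.
move=> cf cF sEF _ [u Eu <-].
have cfF : closed (f @^-1` F) by move: cf => /continuous_closedP; apply.
suff : closure E `<=` f @^-1` F by apply.
rewrite (closure_id (f @^-1` F)).1 //; apply: closureS => y Ey; apply: sEF; by exists y.
Qed.

Lemma closure_sub (E F : set X) : closed F -> E `<=` F -> closure E `<=` F.
Proof. by move=> cF sEF; rewrite (closure_id F).1 //; exact: closureS. Qed.

Lemma closed_subspace_closure (E : set X) : E 0 ->
    (forall (a : R[i]) u v, E u -> E v -> E (a *: u + v)) ->
  closed_subspace (closure E).
Proof.
move=> E0 El; split; first exact: closed_closure.
split; first exact: subset_closure.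
have affl (a : R[i]) v : continuous (fun u : X => a *: u + v).
  by move=> u; apply: cvgD; [exact: scaler_continuous | exact: cvg_cst].
have affr (a : R[i]) u : continuous (fun v : X => a *: u + v).
  by move=> v; apply: cvgD; [exact: cvg_cst | exact: cvg_id].
move=> a u v cu cv.
have cuE w : E w -> closure E (a *: u + w).
  move=> Ew; apply: (@image_closure_sub _ E _ (affl a w) (@closed_closure _ E)).
    by move=> _ [y Ey <-]; apply: subset_closure; apply: El.
  by exists u.
apply: (@image_closure_sub _ E _ (affr a u) (@closed_closure _ E)); last by exists v.
by move=> _ [y Ey <-]; apply: cuE.
Qed.

Lemma closed_subspace_image (S Sinv : X -> X) (M : set X) :
  bop_inverse S Sinv -> closed_subspace M -> closed_subspace (S @` M).
Proof.
move=> SSinv [cM [M0 Ml]]; rewrite (image_bop_inverse SSinv).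
case: SSinv => _ [[lI cI] _]; split.
  by move: cI => /continuous_closedP; apply.
split=> /=; first by rewrite linear_fun0.
by move=> a u v Mu Mv /=; rewrite lI; apply: Ml.
Qed.

Lemma collineation_inverse (F : set (set X)) (S Sinv : X -> X) :
  bop_inverse S Sinv -> collineation F S -> collineation F Sinv.
Proof.
move=> SSinv col M cM.
have := col _ (closed_subspace_image (bop_inverse_sym SSinv) cM).
by rewrite (image_bop_inverseK (bop_inverse_sym SSinv)); exact: iff_sym.
Qed.

End BoundedOperators.

Section Invariants.
Variables (R : realType) (X : completeNormedModType R[i]).
Variable (A : set (X -> X)).

Lemma sub_Alg_Lat : A `<=` @bop R X -> A `<=` Alg (Lat A).
Proof. by move=> Abop T AT; split; [exact: Abop | move=> M [_]; apply]. Qed.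

Lemma reflexive_algebra_id : reflexive_algebra A -> A id.
Proof. by case=> _ <-; split; [exact: bop_id | move=> M _ _ [m Mm <-]]. Qed.

Lemma Lat_orbit_sp x : subalgebra A -> Lat A (orbit_sp A x).
Proof.
case=> [Abop [A0 [Al Am]]]; split.
  apply: closed_subspace_closure; first by exists (fun _ => 0).
  move=> a _ _ [T AT <-] [U AU <-].
  by exists (fun x => a *: T x + U x) => //; apply: Al.
move=> T AT; apply: image_closure_sub; [by case: (Abop _ AT) | exact: closed_closure |].
by move=> _ [_ [U AU <-] <-]; apply: subset_closure; exists (T \o U) => //; apply: Am.
Qed.

Lemma orbit_sp_min (M : set X) x : Lat A M -> M x -> orbit_sp A x `<=` M.
Proof.
move=> [[cM _] Minv] Mx; apply: closure_sub => // _ [T AT <-].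
by apply: (Minv T AT); exists x.
Qed.

Lemma Lat_conj_alg (S Sinv : X -> X) (N : set X) : bop_inverse S Sinv ->
  closed_subspace N -> Lat (conj_alg S Sinv A) N <-> Lat A (Sinv @` N).
Proof.
move=> SSinv cN; split.
  move=> [_ Ninv]; split; first exact: (closed_subspace_image (bop_inverse_sym SSinv)).
  move=> T AT _ [_ [n Nn <-] <-]; exists (S (T (Sinv n))).
    by apply: (Ninv (S \o T \o Sinv)); [exists T | exists n].
  by rewrite bop_inverseKV.
move=> [_ Ninv]; split=> // _ [T AT <-] _ [n Nn <-] /=.
have [m Nm <-] : (Sinv @` N) (T (Sinv n)).
  by apply: (Ninv T AT); exists (Sinv n) => //; exists n.
by rewrite bop_inverseK.
Qed.

Hypothesis A_id : A id.

Lemma orbit_sp_self x : orbit_sp A x x.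
Proof. by apply: subset_closure; exists id. Qed.

Lemma Lat_image_of_Lat_image_orbit (U V : X -> X) (N : set X) :
  bop_inverse U V -> (forall x, Lat A (U @` orbit_sp A x)) ->
  Lat A N -> Lat A (U @` N).
Proof.
move=> UV LUO LN; split; first by apply: (closed_subspace_image UV); case: LN.
move=> T AT _ [_ [n Nn <-] <-].
have [m Om <-] : (U @` orbit_sp A n) (T (U n)).
  by apply: ((LUO n).2 T AT); exists (U n) => //; exists n => //; exact: orbit_sp_self.
by exists m => //; exact: (orbit_sp_min LN Nn).
Qed.

End Invariants.

Section Collineations.
Variables (R : realType) (X : completeNormedModType R[i]).
Variables (A : set (X -> X)) (S Sinv : X -> X).
Hypothesis rA : reflexive_algebra A.
Hypothesis SSinv : bop_inverse S Sinv.

Let A_id : A id := reflexive_algebra_id rA.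
Let LatO x : Lat A (orbit_sp A x) := Lat_orbit_sp x rA.1.

Lemma Col_iff_Lat_image_orbit : Col A S <->
  forall x, Lat A (S @` orbit_sp A x) /\ Lat A (Sinv @` orbit_sp A x).
Proof.
split.
  move=> [_ col] x; split; first exact: ((col _ (LatO x).1).1 (LatO x)).
  exact: ((collineation_inverse SSinv col (LatO x).1).1 (LatO x)).
move=> LO; split; first by exists Sinv.
move=> M cM; split; first exact: (Lat_image_of_Lat_image_orbit A_id SSinv (fun x => (LO x).1)).
move=> LSM; rewrite -(image_bop_inverseK SSinv M).
exact: (Lat_image_of_Lat_image_orbit A_id (bop_inverse_sym SSinv) (fun x => (LO x).2) LSM).
Qed.

Lemma Col_iff_Lat_conj_alg : Col A S <-> Lat (conj_alg S Sinv A) = Lat A.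
Proof.
split.
  move=> [_ col]; apply/funext => N; apply/propext.
  suff cN_LatA : closed_subspace N -> Lat (conj_alg S Sinv A) N <-> Lat A N.
    by split=> LN; [exact: (cN_LatA LN.1).1 | exact: (cN_LatA LN.1).2].
  move=> cN; rewrite Lat_conj_alg //.
  exact: iff_sym (collineation_inverse SSinv col cN).
move=> LatE; split; first by exists Sinv.
move=> M cM; have cSM := closed_subspace_image SSinv cM.
by rewrite -{2}LatE (Lat_conj_alg A SSinv cSM) (image_bop_inverseK SSinv).
Qed.

Lemma conj_alg_eq_iff_Lat : conj_alg S Sinv A = A <-> Lat (conj_alg S Sinv A) = Lat A.
Proof.
split=> [-> // | LatE].
have [_ col] := Col_iff_Lat_conj_alg.2 LatE.
have [[Abop _] AlgLat] := rA.
have [bS [bI _]] := SSinv.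
apply/seteqP; split.
  rewrite -{2}AlgLat -LatE; apply: sub_Alg_Lat => _ [T AT <-].
  by apply: bop_comp => //; apply: bop_comp => //; exact: Abop.
move=> T AT; exists (Sinv \o T \o S); last first.
  by apply/funext => y /=; rewrite !(bop_inverseK SSinv).
rewrite -AlgLat; split; first by apply: bop_comp => //; apply: bop_comp => //; exact: Abop.
move=> M LM _ [m Mm <-] /=.
have [m' Mm' <-] : (S @` M) (T (S m)).
  by apply: (((col _ LM.1).1 LM).2 T AT); exists (S m) => //; exists m.
by rewrite (bop_inverseKV SSinv).
Qed.

Lemma Lat_image_orbit_iff_image_orbit :
  (forall x, Lat A (S @` orbit_sp A x) /\ Lat A (Sinv @` orbit_sp A x)) <->
  forall x, S @` orbit_sp A x = orbit_sp A (S x).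
Proof.
split=> [LO x | SO x].
  apply/seteqP; split; last first.
    by apply: (orbit_sp_min (LO x).1); exists x => //; exact: orbit_sp_self.
  have SxO : (Sinv @` orbit_sp A (S x)) x.
    by exists (S x); [exact: orbit_sp_self | exact: (bop_inverseKV SSinv)].
  move=> _ [z Oz <-]; have [w Ow <-] := orbit_sp_min (LO (S x)).2 SxO Oz.
  by rewrite (bop_inverseK SSinv).
split; first by rewrite SO.
have -> : orbit_sp A x = S @` orbit_sp A (Sinv x) by rewrite SO (bop_inverseK SSinv).
by rewrite (image_bop_inverseK SSinv).
Qed.

End Collineations.

Theorem theorem3p9 (R : realType) (X : completeNormedModType (R[i]))
    (A : set (X -> X)) (S Sinv : X -> X) :
  reflexive_algebra A -> bop_inverse S Sinv ->
  let a := Col A S in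
  let b := forall x, Lat A (S @` orbit_sp A x) /\ Lat A (Sinv @` orbit_sp A x) in
  let c := conj_alg S Sinv A = A in
  let d := Lat (conj_alg S Sinv A) = Lat A in
  let e := forall x, S @` orbit_sp A x = orbit_sp A (S x) in
  (a <-> b) /\ (a <-> c) /\ (a <-> d) /\ (a <-> e).
Proof.
move=> rA SSinv a b c d e.
have ab : a <-> b := Col_iff_Lat_image_orbit rA SSinv.
have ad : a <-> d := Col_iff_Lat_conj_alg A SSinv.
have cd : c <-> d := conj_alg_eq_iff_Lat rA SSinv.
have be : b <-> e := Lat_image_orbit_iff_image_orbit rA SSinv.
split; first exact: ab.
split; first exact: (iff_trans ad (iff_sym cd)).
by split; [exact: ad | exact: (iff_trans ab be)].
Qed.
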